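(* Encode Tower of Hanoi configurations with $n$ disks on pegs $0,1,2$ by words $x_1\dots x_n\in\{0,1,2\}^n$ (disk $j$, the $j$-th smallest, on peg $x_j$). Let $\Gamma_n$ be the graph on $\{0,1,2\}^n$ with $u\sim v$ iff $v=a_{xy}(u)\ne u$ for some $0\le x<y\le2$, where $a_{xy}$ changes the first occurrence in $u$ of $x$ or $y$ into the other symbol. For distinct $x,y$ let the unique shortest path from $x^n$ to $y^n$ in $\Gamma_n$ be called the geodesic from $x^n$ to $y^n$. Define the partial inverse transducer with states $q_{xy}^{-1}$ for ordered pairs of distinct $x,y\in\{0,1,2\}$ (with $z$ the third element): from state $q_{xy}^{-1}$, reading the letter $x$ outputs $0$ and moves to $q_{xz}^{-1}$, reading $y$ outputs $1$ and moves to $q_{zy}^{-1}$, and reading $z$ is undefined (the computation stops). Then for all $n\ge1$, distinct $x,y$, and every ternary word $u$ of length $n$: starting at $q_{xy}^{-1}$, the word $u$ is read entirely if and only if $u^R$ is a configuration on the geodesic from $x^n$ to $y^n$; and in that case, if $u^R$ is at distance $i$ from $x^n$ along this geodesic, the output produced is $[i]_2^R$, where $[i]_2$ is the length-$n$ binary representation of $i$ with least significant digit first (padded with zeros).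
   Context: $R$ denotes word reversal. *)

From mathcomp Require Import all_boot.
Set Implicit Arguments. Unset Strict Implicit. Unset Printing Implicit Defensive.

(* Pegs are 'I_3; a configuration with n disks is a word u : seq 'I_3 of size n,
   the j-th letter (0-based index j-1) being the peg of the j-th smallest disk. *)
Definition peg := 'I_3.
Definition word := seq peg.

Fixpoint a_op (x y : peg) (u : word) : word :=
  match u with
  | [::] => [::]
  | c :: u' => if c == x then y :: u'
               else if c == y then x :: u'
               else c :: a_op x y u'
  end.

Definition hanoi_adj (u v : word) : bool :=
  [exists x : peg, exists y : peg, [&& (x < y)%N, v == a_op x y u & v != u]].

Definition cst (n : nat) (x : peg) : word := nseq n x.

Definition vert (n : nat) (u : word) : bool := size u == n.

Definition gpath (n : nat) (s t : word) (p : seq word) : Prop :=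
  [/\ all (vert n) p, ohead p = Some s, last s p = t & path hanoi_adj s (behead p)].

Definition geodesic (n : nat) (x y : peg) (p : seq word) : Prop :=
  gpath n (cst n x) (cst n y) p /\
  forall q, gpath n (cst n x) (cst n y) q -> (size p <= size q)%N.

Definition third (x y : peg) : peg := inord (3 - x - y).

(* the partial inverse transducer: state q^{-1}_{xy} encoded by (x,y);
   output digits are 0/1 as nat; None = computation stops (undefined). *)
Fixpoint inv_trans (x y : peg) (u : word) : option (seq nat) :=
  match u with
  | [::] => Some [::]
  | c :: u' =>
      if c == x then omap (cons 0) (inv_trans x (third x y) u')
      else if c == y then omap (cons 1) (inv_trans (third x y) y u')
      else None
  end.

Definition binrep (n i : nat) : seq nat := mkseq (fun j => (i %/ 2 ^ j) %% 2) n.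

From mathcomp Require Import all_boot zify.

(* The geodesic is the recursive solution [hanoi_path n x y]: the n-1 small
   disks go from x to the third peg z, the largest disk moves from x to y, and
   the small disks go from z to y.  To see that every walk from x^n to y^n has
   at least 2^n vertices, with equality only for [hanoi_path], forget the
   largest disk (the last letter); this turns a walk into a [lazy_walk], whose
   steps may repeat a vertex.  The largest disk can leave peg x only when all
   small disks sit on the third peg, so the part of the walk before its first
   move and, symmetrically, the part after its last move project to lazy walks
   between constant words of length n-1, each of length at least 2^(n-1) by
   induction, and both are [hanoi_path]s in case of equality.  Reading the
   reversed configuration, the inverse transducer first sees the largest disk,
   which tells in which half of [hanoi_path] the configuration lies: this is
   the most significant bit of its index. *)

Set Implicit Arguments.
Unset Strict Implicit.
Unset Printing Implicit Defensive.

Lemma third_neq_l (x y : peg) : x != y -> third x y != x.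
Proof.
by case: x y => [[|[|[|//]]] ?] [[|[|[|//]]] ?] //= *; rewrite -val_eqE /= inordK.
Qed.

Lemma thirdC (x y : peg) : third x y = third y x.
Proof. by rewrite /third -!subnDA addnC. Qed.

Lemma third_neq_r (x y : peg) : x != y -> third x y != y.
Proof. by rewrite thirdC eq_sym; apply: third_neq_l. Qed.

Lemma third_unique (x y c : peg) : x != y -> c != x -> c != y -> c = third x y.
Proof.
by case: x y c => [[|[|[|//]]] ?] [[|[|[|//]]] ?] [[|[|[|//]]] ?] //= *;
  apply: val_inj; rewrite /= inordK.
Qed.

Lemma nseq_third (x y : peg) (v : word) :
  x != y -> x \notin v -> y \notin v -> v = nseq (size v) (third x y).
Proof.
move=> xy xv yv; apply/all_pred1P/allP => c cv /=.
by apply/eqP/third_unique => //; [apply: contraNneq xv | apply: contraNneq yv] => <-.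
Qed.

Lemma cst_rcons n x : cst n.+1 x = rcons (cst n x) x.
Proof. by rewrite /cst -cats1 -addn1 nseqD. Qed.

Lemma a_opK x y : involutive (a_op x y).
Proof.
elim=> //= c u IH; case: (eqVneq c x) => [->|cx] /=.
  by case: (eqVneq y x) => [->|_] //=; rewrite eqxx.
case: (eqVneq c y) => [->|cy] /=; first by rewrite eqxx.
by rewrite (negbTE cx) (negbTE cy) IH.
Qed.

Lemma a_opC x y : a_op x y =1 a_op y x.
Proof.
elim=> //= c u IH; case: (eqVneq c x) => [->|cx]; first by case: eqVneq => [->|].
by case: eqVneq => //; rewrite IH.
Qed.

Lemma a_op_notin x y u : x \notin u -> y \notin u -> a_op x y u = u.
Proof.
elim: u => //= c u IH; rewrite !in_cons !negb_or => /andP[xc xu] /andP[yc yu].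
by rewrite eq_sym (negbTE xc) eq_sym (negbTE yc) IH.
Qed.

Lemma a_op_rcons x y u l : a_op x y (rcons u l) =
  if (x \in u) || (y \in u) then rcons (a_op x y u) l
  else rcons u (if l == x then y else if l == y then x else l).
Proof.
elim: u => [|c u IH] /=; first by case: ifP => //; case: ifP.
rewrite !in_cons IH (eq_sym x) (eq_sym y).
case: (eqVneq c x) => //= _; case: (eqVneq c y) => /= _; first by rewrite orbT.
by case: ifP.
Qed.

Lemma hanoi_adj_sym : symmetric hanoi_adj.
Proof.
suff adj_sym u v : hanoi_adj u v -> hanoi_adj v u by move=> u v; apply/idP/idP; apply: adj_sym.
case/existsP=> a /existsP[b /and3P[ab /eqP-> uv]].
by apply/existsP; exists a; apply/existsP; exists b; rewrite ab a_opK eqxx eq_sym.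
Qed.

Lemma hanoi_adj_a_op x y u : x != y -> a_op x y u != u -> hanoi_adj u (a_op x y u).
Proof.
move=> xy uv; have [lt|] := ltnP x y.
  by apply/existsP; exists x; apply/existsP; exists y; rewrite lt eqxx.
rewrite leq_eqVlt val_eqE eq_sym (negbTE xy) /= => lt.
by apply/existsP; exists y; apply/existsP; exists x; rewrite lt a_opC eqxx -a_opC.
Qed.

Lemma hanoi_adj_rcons u v l : hanoi_adj u v -> hanoi_adj (rcons u l) (rcons v l).
Proof.
case/existsP=> a /existsP[b /and3P[ab /eqP-> uv]].
apply/existsP; exists a; apply/existsP; exists b; rewrite ab a_op_rcons.
case: ifP => [_|/norP[au bu]]; first by rewrite eqxx eqseq_rcons negb_and uv.
by rewrite a_op_notin ?eqxx in uv.
Qed.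

Lemma hanoi_adj_move_largest x y v :
  x != y -> x \notin v -> y \notin v -> hanoi_adj (rcons v x) (rcons v y).
Proof.
move=> xy xv yv.
have e : a_op x y (rcons v x) = rcons v y.
  by rewrite a_op_rcons (negbTE xv) (negbTE yv) eqxx.
by rewrite -e; apply: hanoi_adj_a_op; rewrite // e eqseq_rcons eqxx eq_sym.
Qed.

Definition hanoi_step (u v : word) : bool := (u == v) || hanoi_adj u v.

Lemma hanoi_step_refl : reflexive hanoi_step.
Proof. by move=> u; rewrite /hanoi_step eqxx. Qed.

Lemma hanoi_step_sym : symmetric hanoi_step.
Proof. by move=> u v; rewrite /hanoi_step eq_sym hanoi_adj_sym. Qed.

Lemma hanoi_step_rcons u v x y : hanoi_step (rcons u x) (rcons v y) ->
  hanoi_step u v /\ (x != y -> u = nseq (size u) (third x y)).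
Proof.
case/orP=> [|/existsP[a /existsP[b /and3P[ab /eqP e ne]]]].
  by rewrite eqseq_rcons => /andP[/eqP-> /eqP->]; rewrite hanoi_step_refl eqxx.
have {}ab : a != b by rewrite neq_ltn ab.
move: e ne; rewrite a_op_rcons; case: ifP => [_|/norP[au bu]] /rcons_inj[-> ->] ne.
  split=> [|]; last by rewrite eqxx.
  apply/orP; have [->|uv] := eqVneq (a_op a b u) u; first by left.
  by right; apply: hanoi_adj_a_op.
split=> [|xy]; first exact: hanoi_step_refl.
apply: etrans (nseq_third ab au bu) _; congr nseq.
move: xy; case: (eqVneq x a) => [-> //|_].
by case: (eqVneq x b) => [-> _|_]; rewrite ?eqxx // thirdC.
Qed.

Fixpoint hanoi_path (n : nat) (x y : peg) : seq word :=
  if n is n'.+1 then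
    map (rcons^~ x) (hanoi_path n' x (third x y)) ++
    map (rcons^~ y) (hanoi_path n' (third x y) y)
  else [:: [::]].

Lemma size_hanoi_path n x y : size (hanoi_path n x y) = 2 ^ n.
Proof. by elim: n x y => //= n IH x y; rewrite size_cat !size_map !IH expnS mul2n addnn. Qed.

Lemma rev_hanoi_path n x y : rev (hanoi_path n x y) = hanoi_path n y x.
Proof. by elim: n x y => //= n IH x y; rewrite rev_cat -!map_rev !IH thirdC. Qed.

Lemma vert_rcons n v l : vert n.+1 (rcons v l) = vert n v.
Proof. by rewrite /vert size_rcons. Qed.

Lemma hanoi_path_gpath n x y : x != y -> gpath n (cst n x) (cst n y) (hanoi_path n x y).
Proof.
elim: n x y => [|n IH] x y xy; first by [].
set z := third x y; have zx := third_neq_l xy; have zy := third_neq_r xy.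
have xz : x != z by rewrite eq_sym.
have [v1 h1 l1 p1] := IH x z xz.
have [v2 h2 l2 p2] := IH z y zy.
rewrite !cst_rcons /= -/z.
case: (hanoi_path n x z) h1 v1 l1 p1 => // a1 s1 [->] v1 l1 p1.
case: (hanoi_path n z y) h2 v2 l2 p2 => // a2 s2 [->] v2 l2 p2.
rewrite /= in l1 p1 l2 p2; split=> //.
- by rewrite all_cat !all_map; apply/andP; split; [move: v1 | move: v2];
    apply: sub_all => v; rewrite /= vert_rcons.
- by rewrite last_cat /= (last_map (rcons^~ y)) l2.
rewrite cat_path /= (path_map (f := rcons^~ x)) (last_map (rcons^~ x)) (path_map (f := rcons^~ y)) l1.
have lift l : subrel hanoi_adj (relpre (rcons^~ l) hanoi_adj).
  by move=> u v; apply: hanoi_adj_rcons.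
rewrite (sub_path (lift x) p1) (sub_path (lift y) p2) hanoi_adj_move_largest //.
  by rewrite /cst mem_nseq (negbTE xz) andbF.
by rewrite /cst mem_nseq eq_sym (negbTE zy) andbF.
Qed.

Lemma binrepS n i : binrep n.+1 i = rcons (binrep n i) (i %/ 2 ^ n %% 2).
Proof. by rewrite /binrep mkseqS. Qed.

Lemma binrepDl n i : binrep n (2 ^ n + i) = binrep n i.
Proof.
apply/eq_in_map => j; rewrite mem_iota add0n => /andP[_ jn].
have -> : 2 ^ n = 2 ^ (n - j.+1) * 2 * 2 ^ j.
  by rewrite -expnSr subnSK // -expnD subnK // ltnW.
by rewrite divnMDl ?expn_gt0 // modnMDl.
Qed.

Lemma inv_trans_nth_hanoi_path n x y i : x != y -> i < 2 ^ n ->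
  inv_trans x y (rev (nth [::] (hanoi_path n x y) i)) = Some (rev (binrep n i)).
Proof.
elim: n x y i => [|n IH] x y i xy /=; first by rewrite expn0 ltnS leqn0 => /eqP->.
have zx := third_neq_l xy; have zy := third_neq_r xy.
rewrite expnS mul2n -addnn nth_cat size_map size_hanoi_path binrepS rev_rcons => lti.
have [ilt|ige] := ltnP i (2 ^ n).
  rewrite (nth_map [::]) ?size_hanoi_path // rev_rcons /= eqxx IH 1?eq_sym //=.
  by rewrite divn_small // mod0n.
rewrite -(subnKC ige) in lti *; rewrite ltn_add2l in lti.
rewrite addKn (nth_map [::]) ?size_hanoi_path //.
rewrite rev_rcons /= eq_sym (negbTE xy) eqxx IH // binrepDl.
by rewrite -[X in (X + _) %/ _]mul1n divnMDl ?expn_gt0 // divn_small.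
Qed.

Lemma mem_hanoi_path_inv_trans x y u out : x != y -> inv_trans x y u = Some out ->
  rev u \in hanoi_path (size u) x y.
Proof.
elim: u x y out => [|c u IH] x y out xy //=.
have zx := third_neq_l xy; have zy := third_neq_r xy.
rewrite rev_cons mem_cat.
case: (eqVneq c x) => [->|cx].
  case uo: inv_trans => [o|] //= _.
  by rewrite (map_f (rcons^~ x)) // (IH _ _ o) // eq_sym.
case: (eqVneq c y) => [->|//].
case uo: inv_trans => [o|] //= _.
by rewrite (map_f (rcons^~ y)) ?orbT // (IH _ _ o).
Qed.

Definition lazy_walk (n : nat) (s t : word) (W : seq word) : Prop :=
  [/\ all (vert n) W, ohead W = Some s, last s W = t & sorted hanoi_step W].

Lemma gpath_lazy_walk n s t p : gpath n s t p -> lazy_walk n s t p.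
Proof.
case: p => // a p [vp [<-] lp pp]; split=> //=.
by apply: sub_path pp => u v uv; rewrite /hanoi_step uv orbT.
Qed.

Lemma lazy_walk_cons n s s' t W :
  vert n s -> hanoi_step s s' -> lazy_walk n s' t W -> lazy_walk n s t (s :: W).
Proof.
move=> vs ss' [vW hW lW sW]; case: W hW ss' vW lW sW => // a W [<-] ss' vW lW sW.
by split; rewrite //= ?vs ?ss'.
Qed.

Lemma lazy_walk_rev n s t W : lazy_walk n s t W -> lazy_walk n t s (rev W).
Proof.
case: W => [[_ /eqP //]|a W [vW [<-] lW sW]]; split.
- by rewrite all_rev.
- by move: lW; case/lastP: W {vW sW} => [|W b] /= <-; rewrite // rev_cons rev_rcons last_rcons.
- by rewrite rev_cons last_rcons.
by rewrite rev_sorted; apply: sub_sorted sW => u v; rewrite hanoi_step_sym.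
Qed.

Lemma lazy_walk_exit n x y s t W : y != x ->
  lazy_walk n.+1 (rcons s x) (rcons t y) W ->
  exists (A : seq word) (v : word) (b : peg) (B : seq word),
    [/\ W = map (rcons^~ x) A ++ rcons v b :: B, b != x
                    & lazy_walk n s (cst n (third x b)) A].
Proof.
move=> yx; elim: W s => [s [_ /eqP //]|a W IH s [vW [ea] lW sW]].
subst a; case/andP: vW => vs vW.
case: W IH vW lW sW => [|w W] IH /=.
  by move=> _ /rcons_inj[_ xy]; rewrite xy eqxx in yx.
case/andP=> + vW; case/lastP: w IH => [_ //|s1 l] IH vw lW /andP[ss1 sW].
have [{}ss1 sx] := hanoi_step_rcons ss1.
have sn : size s = n by apply/eqP; rewrite vert_rcons in vs.
have [lx|lx] := eqVneq l x.
  subst l; have [|A [v [b [B [-> bx wA]]]]] := IH s1; first by split; rewrite //= vw.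
  by exists (s :: A), v, b, B; split=> //; apply: lazy_walk_cons ss1 wA; rewrite /vert sn.
exists [:: s], s1, l, W; split=> //.
have xl : x != l by rewrite eq_sym.
by split; rewrite /= ?/vert ?sn ?eqxx // {1}(sx xl) sn.
Qed.

Lemma all_prefix_size_le (T : Type) (P : pred T) (A B C D : seq T) :
  all P A -> all (predC P) D -> A ++ B = C ++ D -> size A <= size C.
Proof.
elim: C A => [|c C IH] [|a A] //= /andP[Pa PA] PD.
  by move=> e; move: PD; rewrite -e /= Pa.
by case=> _ /(IH A PA PD).
Qed.

Lemma lazy_walk_min n x y W : x != y -> lazy_walk n (cst n x) (cst n y) W ->
  2 ^ n <= size W /\ (size W <= 2 ^ n -> W = hanoi_path n x y).
Proof.
elim: n x y W => [|n IH] x y W xy.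
  by case: W => [[_ /eqP //]|a W [_ [->] _ _]]; split=> //; case: W.
rewrite !cst_rcons => walkW.
have yx : y != x by rewrite eq_sym.
have [A [v [b [B [eW bx walkA]]]]] := lazy_walk_exit yx walkW.
have [A' [v' [b' [B' [eW' b'y walkA']]]]] := lazy_walk_exit xy (lazy_walk_rev walkW).
have neq_third z w : w != z -> z != third z w by rewrite eq_sym => /third_neq_l; rewrite eq_sym.
have [lbA eqA] := IH _ _ _ (neq_third _ _ bx) walkA.
have [lbA' eqA'] := IH _ _ _ (neq_third _ _ b'y) walkA'.
have eWr : rev W = rev (rcons v b :: B) ++ rev (map (rcons^~ x) A) by rewrite eW rev_cat.
have disj : size A + size A' <= size W.
  have eW2 : W = rev (rcons v' b' :: B') ++ rev (map (rcons^~ y) A').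
    by rewrite -[W]revK eW' rev_cat.
  have : size A <= size (rev (rcons v' b' :: B')).
    rewrite -(size_map (rcons^~ x)).
    apply: (@all_prefix_size_le _ (fun w => last x w == x)) (etrans (esym eW) eW2).
      by rewrite all_map; apply/allP => w _ /=; rewrite last_rcons.
    by rewrite all_rev all_map; apply/allP => w _ /=; rewrite last_rcons.
  by rewrite eW2 size_cat !size_rev size_map leq_add2r.
split; first by rewrite expnS; lia.
rewrite expnS => le2W.
have szA : size A = 2 ^ n by lia.
have szA' : size A' = 2 ^ n by lia.
have szB : size (rcons v b :: B) = size A'.
  apply/eqP; rewrite eqn_leq; move: le2W disj; rewrite eW size_cat size_map.
  by rewrite mul2n -addnn -{1}szA -{1}szA' !leq_add2l => -> ->.
move: eWr; rewrite eW' => /eqP; rewrite eqseq_cat ?size_rev ?size_map //.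
case/andP=> /eqP eA' /eqP eA.
have b_y : b = y.
  have : rcons v b \in map (rcons^~ y) A' by rewrite eA' mem_rev mem_head.
  by case/mapP=> w _ /rcons_inj[].
have b'_x : b' = x.
  have : rcons v' b' \in map (rcons^~ x) A by rewrite -mem_rev -eA mem_head.
  by case/mapP=> w _ /rcons_inj[].
rewrite eW -[rcons v b :: B]revK -eA' (eqA (eq_leq szA)) (eqA' (eq_leq szA')) b_y b'_x.
by rewrite -map_rev rev_hanoi_path (thirdC y).
Qed.

Lemma geodesic_hanoi_path n x y p : x != y -> geodesic n x y p -> p = hanoi_path n x y.
Proof.
move=> xy [gp minp]; have := minp _ (hanoi_path_gpath n xy).
by rewrite size_hanoi_path; case: (lazy_walk_min xy (gpath_lazy_walk gp)) => _.
Qed.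

Theorem mainTheorem15 (n : nat) (x y : peg) (p : seq word) (u : word) :
  (0 < n)%N -> x != y -> geodesic n x y p -> size u = n ->
  ((exists out, inv_trans x y u = Some out) <-> rev u \in p) /\
  (forall i : nat, (i < size p)%N -> nth [::] p i = rev u ->
     inv_trans x y u = Some (rev (binrep n i))).
Proof.
move=> _ xy /(geodesic_hanoi_path xy) -> su.
have accept i : i < 2 ^ n -> nth [::] (hanoi_path n x y) i = rev u ->
    inv_trans x y u = Some (rev (binrep n i)).
  by move=> lti ei; rewrite -[u]revK -ei inv_trans_nth_hanoi_path.
rewrite size_hanoi_path; split=> //; split=> [[out]|].
  by move/(mem_hanoi_path_inv_trans xy); rewrite su.
case/(nthP [::]) => i; rewrite size_hanoi_path => lti /(accept _ lti).
by exists (rev (binrep n i)).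
Qed.
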